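(* Let $D\ge 1$, $\Omega=\{0,1,\dots,D-1\}$, and let $S_1,\dots,S_n\subseteq\Omega$ be nonempty sets. Let $\pi:\Omega\to\Omega$ be a permutation, applied to every set, and put $z_i=\min \pi(S_i)$ for $i=1,\dots,n$. Fix an integer $b\ge 1$ and let $e_{i,t}$ denote the $t$-th lowest bit of the binary representation of $z_i$. Then each of the following symmetric $n\times n$ matrices is positive (semi)definite, i.e. satisfies $\sum_{i,j}c_ic_jK_{ij}\ge 0$ for all $c\in\mathbb{R}^n$: (1) the resemblance matrix $\mathbf{R}$ with $R_{ij}=\frac{|S_i\cap S_j|}{|S_i\cup S_j|}$; (2) the minwise hashing matrix $\mathbf{M}$ with $M_{ij}=1\{z_i=z_j\}$; (3) the $b$-bit minwise hashing matrix $\mathbf{M}^{(b)}$ with $M^{(b)}_{ij}=\prod_{t=1}^b 1\{e_{i,t}=e_{j,t}\}$. Consequently, if $\pi_1,\dots,\pi_k$ are $k$ permutations (e.g. independent random permutations) and $\mathbf{M}^{(b)}_{(s)}$ denotes the $b$-bit minwise hashing matrix generated by $\pi_s$, then $\sum_{s=1}^k\mathbf{M}^{(b)}_{(s)}$ is also positive (semi)definite.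
   Context: Here ''positive definite'' is used in the sense of nonnegative definite: a symmetric matrix $\mathbf K$ with $\sum_{ij}c_ic_jK_{ij}\ge0$ for all real vectors $c$. $1\{\cdot\}$ denotes the indicator function. *)

From HB Require Import structures.
From mathcomp Require Import all_boot all_order all_algebra all_fingroup.
Set Implicit Arguments. Unset Strict Implicit. Unset Printing Implicit Defensive.
Import Order.TTheory GRing.Theory Num.Theory.
Local Open Scope ring_scope.

Definition psd (R : realFieldType) (n : nat) (K : 'M[R]_n) : Prop :=
  K^T = K /\ forall c : 'I_n -> R, 0 <= \sum_(i < n) \sum_(j < n) c i * c j * K i j.

(* minimum of a subset of Omega = {0,..,D-1}, as a natural number
   (equals the true minimum for nonempty sets; D for the empty set). *)
Definition setmin (D : nat) (A : {set 'I_D}) : nat :=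
  \big[minn/D]_(x in A) (x : nat).

Definition minhash (D : nat) (pi : {perm 'I_D}) (S : {set 'I_D}) : nat :=
  setmin (pi @: S).

Definition bit (t z : nat) : bool := odd (z %/ 2 ^ t).

Definition resemblance_mx (R : realFieldType) (D n : nat)
  (S : 'I_n -> {set 'I_D}) : 'M[R]_n :=
  \matrix_(i, j) ((#|S i :&: S j|)%:R / (#|S i :|: S j|)%:R).

Definition minhash_mx (R : realFieldType) (D n : nat)
  (pi : {perm 'I_D}) (S : 'I_n -> {set 'I_D}) : 'M[R]_n :=
  \matrix_(i, j) ((minhash pi (S i) == minhash pi (S j))%:R).

(* b-bit: prod_{t=1..b} 1{e_{i,t} = e_{j,t}}, bits indexed 0..b-1 here *)
Definition bbit_mx (R : realFieldType) (D n b : nat)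
  (pi : {perm 'I_D}) (S : 'I_n -> {set 'I_D}) : 'M[R]_n :=
  \matrix_(i, j) \prod_(t < b)
     ((bit t (minhash pi (S i)) == bit t (minhash pi (S j)))%:R).

(* Each minwise hashing matrix is the Gram matrix of indicator features
   (1{z_i = v})_v, so it is positive semidefinite, and so is its b-bit variant
   (compare the vectors of the b lowest bits).  For the resemblance, let
   A, B be nonempty: pi A and pi B have the same minimum exactly when the
   element of A ∪ B that pi sends lowest lies in A ∩ B, and by symmetry under
   transpositions every element of A ∪ B is that element for the same number
   of permutations.  Hence the resemblance matrix is the average of the
   minwise hashing matrices over all D! permutations. *)
From HB Require Import structures.
From mathcomp Require Import all_boot all_order all_algebra all_fingroup.
Set Implicit Arguments. Unset Strict Implicit. Unset Printing Implicit Defensive.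
Import Order.TTheory GRing.Theory Num.Theory.

Section PsdClosure.
Variables (R : realFieldType) (n : nat).
Local Open Scope ring_scope.

Lemma psd_gram (T : Type) (r : seq T) (a : 'I_n -> T -> R) :
  psd (\matrix_(i, j) \sum_(v <- r) a i v * a j v).
Proof.
split.
  by apply/matrixP => i j; rewrite !mxE; apply: eq_bigr => v _; rewrite mulrC.
move=> c; rewrite (_ : \sum_i _ = \sum_(v <- r) (\sum_i c i * a i v) ^+ 2).
  by apply: sumr_ge0 => v _; exact: sqr_ge0.
under eq_bigr => i _ do under eq_bigr => j _ do rewrite mxE big_distrr /=.
under eq_bigr => i _ do rewrite exchange_big /=.
rewrite exchange_big /=; apply: eq_bigr => v _.
rewrite expr2 big_distrl /=; apply: eq_bigr => i _.
rewrite big_distrr /=; apply: eq_bigr => j _.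
by rewrite mulrACA.
Qed.

Lemma psd_eq_indicator (T : eqType) (f : 'I_n -> T) :
  psd (\matrix_(i, j) ((f i == f j)%:R : R)).
Proof.
set r := undup [seq f i | i <- enum 'I_n].
have fr i : f i \in r by rewrite mem_undup map_f ?mem_enum.
suff -> : \matrix_(i, j) ((f i == f j)%:R : R) =
          \matrix_(i, j) \sum_(v <- r) (f i == v)%:R * (f j == v)%:R.
  exact: psd_gram.
apply/matrixP => i j; rewrite !mxE (bigD1_seq (f i)) ?undup_uniq //= eqxx mul1r.
rewrite big1 ?addr0 1?eq_sym // => v /negbTE fiv.
by rewrite eq_sym fiv mul0r.
Qed.

Lemma psd0 : psd (0 : 'M[R]_n).
Proof.
split; first by rewrite trmx0.
by move=> c; apply: sumr_ge0 => i _; apply: sumr_ge0 => j _; rewrite mxE mulr0.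
Qed.

Lemma psdD (A B : 'M[R]_n) : psd A -> psd B -> psd (A + B).
Proof.
move=> [symA posA] [symB posB]; split; first by rewrite linearD /= symA symB.
move=> c; have := addr_ge0 (posA c) (posB c); rewrite -big_split /=.
congr (_ <= _); apply: eq_bigr => i _; rewrite -big_split; apply: eq_bigr => j _.
by rewrite mxE mulrDr.
Qed.

Lemma psd_sum (I : finType) (F : I -> 'M[R]_n) :
  (forall s, psd (F s)) -> psd (\sum_s F s).
Proof. by move=> psdF; apply: (big_ind (@psd R n)); [exact: psd0 | exact: psdD |]. Qed.

Lemma psdZ (a : R) (A : 'M[R]_n) : 0 <= a -> psd A -> psd (a *: A).
Proof.
move=> a_ge0 [symA posA]; split; first by rewrite linearZ /= symA.
move=> c; have := mulr_ge0 a_ge0 (posA c); rewrite mulr_sumr.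
congr (_ <= _); apply: eq_bigr => i _; rewrite mulr_sumr; apply: eq_bigr => j _.
by rewrite mxE mulrCA.
Qed.

End PsdClosure.

HB.instance Definition _ := SemiGroup.isComLaw.Build nat minn minnA minnC.

Lemma setmin_eq D (C : {set 'I_D}) (x : 'I_D) :
  x \in C -> (forall y, y \in C -> x <= y) -> setmin C = x.
Proof.
move=> Cx minx; apply/eqP; rewrite eqn_leq /setmin (bigD1 x) //= geq_minl leq_min leqnn.
apply: (big_ind (fun v => x <= v)) => [|u v xu xv|y /andP [Cy _]].
- exact: ltnW.
- by rewrite leq_min xu xv.
- exact: minx.
Qed.

Section Minimizer.
Variables (D : nat) (pi : {perm 'I_D}).

Definition minimizer (C : {set 'I_D}) (x : 'I_D) :=
  (x \in C) && [forall y in C, pi x <= pi y].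

Lemma minimizer_uniq (C : {set 'I_D}) x y : minimizer C x -> minimizer C y -> x = y.
Proof.
move=> /andP [Cx /forall_inP minx] /andP [Cy /forall_inP miny].
apply: (@perm_inj _ pi); apply: val_inj.
by apply/eqP; rewrite eqn_leq minx // miny.
Qed.

Lemma minimizer_exists (C : {set 'I_D}) c0 : c0 \in C -> exists x, minimizer C x.
Proof.
move=> Cc0; case: (arg_minnP (fun x => (pi x : nat)) Cc0) => x Cx minx.
by exists x; apply/andP; split => //; apply/forall_inP.
Qed.

Lemma minimizerS (C C' : {set 'I_D}) x : C' \subset C -> x \in C' -> minimizer C x ->
  minimizer C' x.
Proof.
move=> /subsetP sC'C C'x /andP [_ /forall_inP minx].
by rewrite /minimizer C'x; apply/forall_inP => y /sC'C; exact: minx.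
Qed.

Lemma minhash_minimizer A a : minimizer A a -> minhash pi A = pi a.
Proof.
move=> /andP [Aa /forall_inP mina]; apply: setmin_eq; first exact: imset_f.
by move=> _ /imsetP [y Ay ->]; exact: mina.
Qed.

End Minimizer.

Section Collision.
Variables (D : nat) (A B : {set 'I_D}) (a0 b0 : 'I_D).
Hypotheses (Aa0 : a0 \in A) (Bb0 : b0 \in B).

Definition first_hit (pi : {perm 'I_D}) :=
  [arg min_(x < a0 in A :|: B) (pi x : nat)].

Lemma first_hitP pi : minimizer pi (A :|: B) (first_hit pi).
Proof.
rewrite /first_hit; case: arg_minnP => [|x Ux minx]; first by rewrite inE Aa0.
by apply/andP; split => //; apply/forall_inP.
Qed.

Lemma minhash_collision pi :
  (minhash pi A == minhash pi B) = (first_hit pi \in A :&: B).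
Proof.
have [a minA] := minimizer_exists pi Aa0; have [b minB] := minimizer_exists pi Bb0.
have /andP [Aa _] := minA; have /andP [Bb _] := minB.
have /andP [Ux _] := first_hitP pi.
have hitA : first_hit pi \in A -> first_hit pi = a.
  by move=> Ax; apply: minimizer_uniq minA; exact: minimizerS (subsetUl A B) Ax (first_hitP pi).
have hitB : first_hit pi \in B -> first_hit pi = b.
  by move=> Bx; apply: minimizer_uniq minB; exact: minimizerS (subsetUr A B) Bx (first_hitP pi).
rewrite (minhash_minimizer minA) (minhash_minimizer minB) inE.
apply/eqP/andP => [/val_inj/perm_inj eq_ab | [/hitA <- /hitB <-] //].
rewrite inE in Ux; case/orP: Ux => [/hitA | /hitB] ->.
- by rewrite Aa eq_ab.
- by rewrite Bb -eq_ab.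
Qed.

Definition first_hit_fiber x := [set pi | first_hit pi == x].

(* Precomposing with the transposition (x y) moves the first hit from x to y. *)
Lemma card_first_hit_fiber_le x y : x \in A :|: B -> y \in A :|: B ->
  #|first_hit_fiber x| <= #|first_hit_fiber y|.
Proof.
move=> Ux Uy; rewrite -(card_imset _ (mulgI (tperm x y))).
apply/subset_leq_card/subsetP => s /imsetP [pi]; rewrite inE => /eqP hit_x ->.
rewrite inE; apply/eqP/(minimizer_uniq (first_hitP _)).
have /andP [_ /forall_inP minx] := first_hitP pi; rewrite hit_x in minx.
rewrite /minimizer Uy; apply/forall_inP => z Uz.
rewrite !permM tpermR; apply: minx.
by case: tpermP.
Qed.

Lemma card_first_hit_fiber x : x \in A :|: B ->
  #|first_hit_fiber x| = #|first_hit_fiber a0|.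
Proof. by move=> Ux; apply/eqP; rewrite eqn_leq !card_first_hit_fiber_le // inE Aa0. Qed.

Lemma card_first_hit_in (C : {set 'I_D}) : C \subset A :|: B ->
  #|[set pi | first_hit pi \in C]| = #|C| * #|first_hit_fiber a0|.
Proof.
move=> /subsetP sCU; rewrite -sum1dep_card.
rewrite (partition_big first_hit (mem C)) //= -sum_nat_const.
apply: eq_bigr => x Cx; rewrite -(card_first_hit_fiber (sCU x Cx)).
rewrite -sum1dep_card; apply: eq_bigl => pi /=.
by rewrite andb_idl // => /eqP ->.
Qed.

Lemma card_minhash_collision :
  #|[set pi : {perm 'I_D} | minhash pi A == minhash pi B]| * #|A :|: B|
    = D`! * #|A :&: B|.
Proof.
have all_hit : [set pi | first_hit pi \in A :|: B] = [set: {perm 'I_D}].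
  by apply/setP => pi; rewrite in_setT in_set; case/andP: (first_hitP pi).
have := card_first_hit_in (subxx (A :|: B)).
rewrite all_hit cardsT card_Sn => ->.
rewrite (_ : [set pi | _] = [set pi | first_hit pi \in A :&: B]); last first.
  by apply/setP => pi; rewrite !inE minhash_collision !inE.
rewrite card_first_hit_in; last by apply/subsetP => x; rewrite !inE => /andP [->].
by rewrite mulnAC [RHS]mulnC mulnA.
Qed.

End Collision.

Local Open Scope ring_scope.

Lemma prodr_indicator (R : comPzSemiRingType) (I : finType) (P : pred I) :
  \prod_i ((P i)%:R : R) = ([forall i, P i])%:R.
Proof.
case: forallP => [allP | /forallP]; first by rewrite big1 // => i _; rewrite allP.
rewrite negb_forall => /existsP [i /negbTE notPi].
by rewrite (bigD1 i) //= notPi mul0r.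
Qed.

Lemma minhash_psd (R : realFieldType) D n (pi : {perm 'I_D})
    (S : 'I_n -> {set 'I_D}) :
  psd (minhash_mx R pi S).
Proof. exact: (psd_eq_indicator R (fun i => minhash pi (S i))). Qed.

Lemma bbit_psd (R : realFieldType) D n b (pi : {perm 'I_D})
    (S : 'I_n -> {set 'I_D}) :
  psd (bbit_mx R b pi S).
Proof.
pose bits i := [ffun t : 'I_b => bit t (minhash pi (S i))].
suff -> : bbit_mx R b pi S = \matrix_(i, j) ((bits i == bits j)%:R : R).
  exact: psd_eq_indicator.
apply/matrixP => i j; rewrite !mxE prodr_indicator; congr ((_ : bool)%:R).
apply/forallP/eqP => [same | /ffunP same t].
  by apply/ffunP => t; rewrite !ffunE; apply/eqP.
by move: (same t); rewrite !ffunE => ->.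
Qed.

Lemma resemblance_mx_mean (R : realFieldType) D n (S : 'I_n -> {set 'I_D}) :
  (forall i, S i != set0) ->
  resemblance_mx R S = (D`!%:R)^-1 *: \sum_(pi : {perm 'I_D}) minhash_mx R pi S.
Proof.
move=> nonempty; apply/matrixP => i j.
have /set0Pn [a0 Aa0] := nonempty i; have /set0Pn [b0 Bb0] := nonempty j.
rewrite !mxE summxE; under eq_bigr => pi _ do rewrite mxE.
rewrite -natr_sum
  (_ : (\sum_pi _)%N = #|[set pi | minhash pi (S i) == minhash pi (S j)]|);
  last by rewrite -sum1dep_card [RHS]big_mkcond.
have union_gt0 : (#|S i :|: S j|%:R : R) != 0.
  by rewrite pnatr_eq0 -lt0n; apply/card_gt0P; exists a0; rewrite inE Aa0.
have fact_gt0 : (D`!%:R : R) != 0 by rewrite pnatr_eq0 -lt0n fact_gt0.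
apply: (mulIf union_gt0); rewrite mulfVK // -mulrA -natrM.
by rewrite (card_minhash_collision Aa0 Bb0) natrM mulrA mulVf ?mul1r.
Qed.

Theorem theorem2 (R : realFieldType) (D n b : nat) (S : 'I_n -> {set 'I_D}) :
  (0 < D)%N -> (0 < b)%N -> (forall i, S i != set0) ->
  [/\ psd (resemblance_mx R S),
      (forall pi : {perm 'I_D}, psd (minhash_mx R pi S)),
      (forall pi : {perm 'I_D}, psd (bbit_mx R b pi S)) &
      (forall (k : nat) (pis : 'I_k -> {perm 'I_D}),
          psd (\sum_(s < k) bbit_mx R b (pis s) S))].
Proof.
move=> _ _ nonempty; split.
- rewrite resemblance_mx_mean //; apply: psdZ; first by rewrite invr_ge0 ler0n.
  by apply: psd_sum => pi; exact: minhash_psd.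
- by move=> pi; exact: minhash_psd.
- by move=> pi; exact: bbit_psd.
- by move=> k pis; apply: psd_sum => s; exact: bbit_psd.
Qed.
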